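(* Let $f\in F$ and suppose that left-multiplying $f$ by $x_1$ creates a caret in the top forest (i.e. the new top caret joining the top trees $T_0,T_1$ of the reduced forest diagram of $f$ does not oppose a bottom caret). Then $\ell(x_1f)=\ell(f)\pm1$, and $\ell(x_1f)=\ell(f)-1$ if and only if the right space of $f$ has label pair $(R,R)$.
   Context: Thompson's group $F$ is realized as the group of all orientation-preserving piecewise-linear homeomorphisms $f$ of $\mathbb R$ with finitely many breakpoints, all breakpoints having dyadic rational coordinates, all slopes integral powers of $2$, and with $f(t)=t-m$ for all sufficiently negative $t$ and $f(t)=t-n$ for all sufficiently positive $t$, for some integers $m,n$. Products are compositions of functions: $fg=f\circ g$. The generators are $x_0(t)=t-1$ and $x_1(t)=t$ for $t\le 0$, $x_1(t)=t/2$ for $0\le t\le 2$, $x_1(t)=t-1$ for $t\ge 2$. A forest diagram for $x_1f$ is obtained from one for $f$ by attaching a new caret to the roots of the top trees $T_0,T_1$ and pointing the top pointer at the combined tree. Forest diagrams: a binary forest is a sequence $(T_i)_{i\in\mathbb Z}$ of finite rooted binary trees (every node has $0$ or $2$ children; internal nodes are called carets; a trivial tree is a single leaf), all but finitely many trivial, together with a pointer marking $T_0$. Tree $T_i$ represents the interval $[i,i+1]$, each caret represents halving the interval of its node, and the leaves of the forest give a dyadic subdivision of $\mathbb R$. A forest diagram for $f$ is a pair of binary forests, the bottom (domain) forest with subdivision $\mathcal D$ and the top (range) forest with subdivision $\mathcal R$, such that $f$ maps each interval of $\mathcal D$ linearly onto an interval of $\mathcal R$; this matches the leaves of the two forests by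 an order-preserving bijection, so the two forests share one linearly ordered set of leaves (columns). A reduction deletes an opposing pair of carets, i.e. a top caret and a bottom caret both of whose children are leaves and which have the same two (matched) leaves. A forest diagram is reduced if no reduction is possible; every element of $F$ has a unique reduced forest diagram. The support of a forest diagram is the smallest set of consecutive columns containing all leaves of nontrivial trees of either forest and the leaves of the two trees marked by the two pointers. A space is a gap between two consecutive columns; the spaces in the support are the gaps between consecutive columns of the support. The current tree of $f$ is the tree of the top forest (of the reduced diagram) marked by the top pointer; the right (resp. left) space of $f$ is the space immediately to the right (resp. left) of the current tree. Labels: in each of the two forests separately (using that forest's own pointer), a space is interior if the leaves on both sides of it belong to the same tree and exterior otherwise; it lies immediately to the left of a caret $c$ of that forest if the leaf immediately to its right is the leftmost leaf descending from $c$. Each space of the support receives a label in each forest: $L$ if it is exterior and to the left of the tree marked by the pointer; otherwise $N$ if it lies immediately to the left of some caret; otherwise $R$ if it is exterior (hence to the right of the marked tree); otherwise $I$ (interior). A space thus has a label pair (top label, bottom label); spaces outside the support are unlabeled. Weights, by (top, bottom): $(L,L)=2$, $(L,N)=1$, $(L,R)=1$, $(L,I)=1$; $(N,L)=1$, $(N,N)=2$, $(N,R)=2$, $(N,I)=2$; $(R,L)=1$, $(R,N)=2$, $(R,R)=2$, $(R,I)=0$; $(I,L)=1$, $(I,N)=2$, $(I,R)=0$, $(I,I)=0$. For $f\in F$, $\ell(f)=\ell_0(f)+\ell_1(f)$, where $\ell_0(f)$ is the sum of the weights of the spaces in the support of the reduced forest diagram of $f$ and $\ell_1(f)$ is its total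 number of carets; $\ell(f)$ equals the word length of $f$ with respect to $\{x_0,x_1\}$. *)

From mathcomp Require Import all_boot.
Set Implicit Arguments. Unset Strict Implicit. Unset Printing Implicit Defensive.

(* Finite rooted binary trees; internal nodes are carets. *)
Inductive tree := Leaf | Node of tree & tree.

Definition is_leaf (t : tree) : bool := if t is Leaf then true else false.

Fixpoint nleaves (t : tree) : nat :=
  match t with Leaf => 1 | Node l r => nleaves l + nleaves r end.

Fixpoint ncarets (t : tree) : nat :=
  match t with Leaf => 0 | Node l r => (ncarets l + ncarets r).+1 end.

(* For each leaf of t (left to right): is it the leftmost leaf descending
   from some caret of t? *)
Fixpoint lmflags (t : tree) : seq bool :=
  match t with
  | Leaf => [:: false]
  | Node l r => (true :: behead (lmflags l)) ++ lmflags r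
  end.

(* A binary forest, represented by a finite window [trees] of consecutive
   trees together with the index [ptr] of the tree marked by the pointer;
   all trees outside the window are trivial.  Columns (leaves) of the window
   are numbered 0, 1, ..., from left to right. *)
Record forest := Forest { trees : seq tree; ptr : nat }.

(* A forest diagram: top (range) forest and bottom (domain) forest over the
   same window of columns: column j of the top forest is matched with
   column j of the bottom forest (outside the window both forests are
   trivial and columns are matched in order). *)
Record fdiag := FDiag { top : forest; bot : forest }.

Definition ftree (F : forest) (i : nat) : tree := nth Leaf (trees F) i.

Definition nleavesF (F : forest) : nat := sumn (map nleaves (trees F)).
Definition ncaretsF (F : forest) : nat := sumn (map ncarets (trees F)).

Definition start (F : forest) (i : nat) : nat :=
  sumn (map nleaves (take i (trees F))).

Definition tree_idxs (F : forest) : seq nat := iota 0 (size (trees F)).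

Definition colmap (F : forest) : seq nat :=
  flatten [seq nseq (nleaves (ftree F i)) i | i <- tree_idxs F].

Definition lmcols (F : forest) : seq bool := flatten (map lmflags (trees F)).

Definition wf_diag (D : fdiag) : bool :=
  [&& ptr (top D) < size (trees (top D)),
      ptr (bot D) < size (trees (bot D)) &
      nleavesF (top D) == nleavesF (bot D)].

(* leftmost columns of the carets of t both of whose children are leaves;
   off = column of the leftmost leaf of t *)
Fixpoint simple_at (t : tree) (off : nat) : seq nat :=
  match t with
  | Leaf => [::]
  | Node Leaf Leaf => [:: off]
  | Node l r => simple_at l off ++ simple_at r (off + nleaves l)
  end.

Definition simpleF (F : forest) : seq nat :=
  flatten [seq simple_at (ftree F i) (start F i) | i <- tree_idxs F].

(* an opposing pair: a top and a bottom caret with the same two leaves *)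
Definition has_opposing_pair (D : fdiag) : bool :=
  has (fun c => c \in simpleF (bot D)) (simpleF (top D)).

Definition reduced (D : fdiag) : bool := ~~ has_opposing_pair D.

Fixpoint repl_tree (t : tree) (off c : nat) : tree :=
  match t with
  | Leaf => Leaf
  | Node Leaf Leaf => if off == c then Leaf else t
  | Node l r => Node (repl_tree l off c) (repl_tree r (off + nleaves l) c)
  end.

Definition repl_forest (F : forest) (c : nat) : forest :=
  Forest [seq repl_tree (ftree F i) (start F i) c | i <- tree_idxs F] (ptr F).

Definition reduce_step (D : fdiag) : option fdiag :=
  match [seq c <- simpleF (top D) | c \in simpleF (bot D)] with
  | [::] => None
  | c :: _ => Some (FDiag (repl_forest (top D) c) (repl_forest (bot D) c))
  end.

Fixpoint reduce_fuel (n : nat) (D : fdiag) : fdiag :=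
  match n with
  | 0 => D
  | n.+1 => match reduce_step D with
            | None => D
            | Some D' => reduce_fuel n D'
            end
  end.

(* full reduction (each step deletes two carets) *)
Definition reduce (D : fdiag) : fdiag :=
  reduce_fuel (ncaretsF (top D) + ncaretsF (bot D)).+1 D.

Definition join_at (s : seq tree) (k : nat) : seq tree :=
  take k s ++ Node (nth Leaf s k) (nth Leaf s k.+1) :: drop k.+2 s.

(* pad the window on the right by one trivial tree in each forest (so that
   T_1 lies in the window), then attach a new top caret to the roots of the
   top trees T_0, T_1 and point the top pointer at the combined tree *)
Definition x1_attach (D : fdiag) : fdiag :=
  FDiag (Forest (join_at (rcons (trees (top D)) Leaf) (ptr (top D))) (ptr (top D)))
        (Forest (rcons (trees (bot D)) Leaf) (ptr (bot D))).

(* the new top caret does not oppose a bottom caret: it opposes one iff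
   T_0, T_1 are trivial and the bottom forest has a caret with exactly
   those two leaves *)
Definition x1_creates_caret (D : fdiag) : bool :=
  let D' := x1_attach D in
  let p := ptr (top D) in
  ~~ [&& is_leaf (nth Leaf (rcons (trees (top D)) Leaf) p),
         is_leaf (nth Leaf (rcons (trees (top D)) Leaf) p.+1) &
         start (top D') p \in simpleF (bot D')].

Inductive label := lab_L | lab_N | lab_R | lab_I.

(* label, in forest F, of the space between columns j and j+1 *)
Definition label_of (F : forest) (j : nat) : label :=
  let a := nth 0 (colmap F) j in
  let b := nth 0 (colmap F) j.+1 in
  let exterior := a != b in
  if exterior && (b <= ptr F) then lab_L
  else if nth false (lmcols F) j.+1 then lab_N
  else if exterior then lab_R
  else lab_I.

Definition weight (t b : label) : nat :=
  match t, b with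
  | lab_L, lab_L => 2 | lab_L, lab_N => 1 | lab_L, lab_R => 1 | lab_L, lab_I => 1
  | lab_N, lab_L => 1 | lab_N, lab_N => 2 | lab_N, lab_R => 2 | lab_N, lab_I => 2
  | lab_R, lab_L => 1 | lab_R, lab_N => 2 | lab_R, lab_R => 2 | lab_R, lab_I => 0
  | lab_I, lab_L => 1 | lab_I, lab_N => 2 | lab_I, lab_R => 0 | lab_I, lab_I => 0
  end.

Definition relevant_tree_cols (F : forest) (i : nat) : seq nat :=
  if ~~ is_leaf (ftree F i) || (i == ptr F)
  then iota (start F i) (nleaves (ftree F i)) else [::].

Definition relevant_cols (D : fdiag) : seq nat :=
  flatten [seq relevant_tree_cols (top D) i | i <- tree_idxs (top D)] ++
  flatten [seq relevant_tree_cols (bot D) i | i <- tree_idxs (bot D)].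

(* the support is the set of columns supp_lo .. supp_hi *)
Definition supp_lo (D : fdiag) : nat :=
  foldr minn (head 0 (relevant_cols D)) (relevant_cols D).
Definition supp_hi (D : fdiag) : nat := foldr maxn 0 (relevant_cols D).

Definition support_spaces (D : fdiag) : seq nat :=
  iota (supp_lo D) (supp_hi D - supp_lo D).

Definition ell0 (D : fdiag) : nat :=
  sumn [seq weight (label_of (top D) j) (label_of (bot D) j)
       | j <- support_spaces D].

Definition ell1 (D : fdiag) : nat := ncaretsF (top D) + ncaretsF (bot D).

(* ell of a reduced forest diagram *)
Definition ell (D : fdiag) : nat := ell0 D + ell1 D.

(* the right space of the current tree (top tree marked by the top
   pointer): the space between its rightmost column and the next column *)
Definition right_space (D : fdiag) : nat :=
  (start (top D) (ptr (top D)) + nleaves (ftree (top D) (ptr (top D)))).-1.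

Definition label_pair (D : fdiag) (j : nat) : option (label * label) :=
  if (supp_lo D <= j) && (j < supp_hi D)
  then Some (label_of (top D) j, label_of (bot D) j) else None.

(* Let [a] be the current tree of f and [b] the tree to its right.  If the new
   caret does not oppose a bottom caret, the diagram of x_1 f is obtained by
   joining [a] and [b] and is already reduced, so it has one caret more.
   Joining changes the label of no space except the right space r of f: its
   top label R (if [b] is trivial) becomes I, its top label N stays N.  The
   support only gains the columns of [b]; this adds r to the support when r
   was not in it, and r then has weight 0: the bottom forest has nothing
   relevant to its right, so its bottom label is R or I.  In the
   weight table the change R -> I of the top label only matters for bottom
   label R, where the weight drops from 2 to 0.  Hence the length drops by one
   exactly when r is labelled (R, R), and grows by one otherwise. *)

From mathcomp Require Import all_boot zify.
Set Implicit Arguments. Unset Strict Implicit. Unset Printing Implicit Defensive.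

Definition nleaves_seq (s : seq tree) : nat := sumn (map nleaves s).
Definition ncarets_seq (s : seq tree) : nat := sumn (map ncarets s).

Lemma nleaves_gt0 t : 0 < nleaves t.
Proof. by elim: t => //= l IHl r IHr; rewrite addn_gt0 IHl. Qed.

Lemma nleaves_leaf t : is_leaf t -> nleaves t = 1.
Proof. by case: t. Qed.

Lemma nleaves_seq_cat s t : nleaves_seq (s ++ t) = nleaves_seq s + nleaves_seq t.
Proof. by rewrite /nleaves_seq map_cat sumn_cat. Qed.

Lemma nleaves_seq_rcons_leaf s : nleaves_seq (rcons s Leaf) = (nleaves_seq s).+1.
Proof. by rewrite -cats1 nleaves_seq_cat addn1. Qed.

Lemma ncarets_seq_cat s t : ncarets_seq (s ++ t) = ncarets_seq s + ncarets_seq t.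
Proof. by rewrite /ncarets_seq map_cat sumn_cat. Qed.

Lemma ncarets_seq_rcons_leaf s : ncarets_seq (rcons s Leaf) = ncarets_seq s.
Proof. by rewrite -cats1 ncarets_seq_cat addn0. Qed.

Lemma size_lmflags t : size (lmflags t) = nleaves t.
Proof.
elim: t => //= l IHl r IHr; rewrite size_cat /= size_behead IHl IHr.
by rewrite -addSn prednK ?nleaves_gt0.
Qed.

Lemma size_flatten_lmflags s : size (flatten (map lmflags s)) = nleaves_seq s.
Proof.
by rewrite size_flatten /shape -map_comp; congr sumn; apply: eq_map => t /=; rewrite size_lmflags.
Qed.

Lemma lmflags_head t : nth false (lmflags t) 0 = ~~ is_leaf t.
Proof. by case: t. Qed.

Lemma lmflags_leaf t k : is_leaf t -> nth false (lmflags t) k = false.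
Proof. by case: t => // _; case: k => //= k; rewrite nth_nil. Qed.

Lemma simple_at_node l r off : simple_at (Node l r) off =
  if is_leaf l && is_leaf r then [:: off] else simple_at l off ++ simple_at r (off + nleaves l).
Proof. by case: l => [|? ?]; case: r => [|? ?]. Qed.

Fixpoint flat_trees (A : Type) (f : nat -> nat -> tree -> seq A) (k off : nat)
    (s : seq tree) : seq A :=
  if s is t :: s' then f k off t ++ flat_trees f k.+1 (off + nleaves t) s' else [::].

Lemma flat_trees_cons A (f : nat -> nat -> tree -> seq A) k off t s :
  flat_trees f k off (t :: s) = f k off t ++ flat_trees f k.+1 (off + nleaves t) s.
Proof. by []. Qed.

Lemma flat_treesE A (f : nat -> nat -> tree -> seq A) s :
  flatten [seq f i (nleaves_seq (take i s)) (nth Leaf s i) | i <- iota 0 (size s)]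
  = flat_trees f 0 0 s.
Proof.
suff gen pre : flatten [seq f i (nleaves_seq (take i (pre ++ s))) (nth Leaf (pre ++ s) i)
                       | i <- iota (size pre) (size s)]
                = flat_trees f (size pre) (nleaves_seq pre) s.
  exact: (gen [::]).
elim: s pre => [|t s IH] pre //=.
rewrite take_size_cat // nth_cat ltnn subnn /=; congr (_ ++ _).
have := IH (rcons pre t); rewrite size_rcons cat_rcons => ->.
by rewrite -cats1 nleaves_seq_cat /nleaves_seq /= addn0.
Qed.

Lemma flat_trees_cat A (f : nat -> nat -> tree -> seq A) k off s t :
  flat_trees f k off (s ++ t) =
  flat_trees f k off s ++ flat_trees f (k + size s) (off + nleaves_seq s) t.
Proof.
elim: s k off => [|t' s IH] k off /=; first by rewrite !addn0.
by rewrite IH catA addSnnS addnA.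
Qed.

Definition owner_block (k off : nat) (t : tree) : seq nat := nseq (nleaves t) k.

Definition relevant_block (p k off : nat) (t : tree) : seq nat :=
  if ~~ is_leaf t || (k == p) then iota off (nleaves t) else [::].

Definition simple_block (k off : nat) (t : tree) : seq nat := simple_at t off.

Lemma colmapE F : colmap F = flat_trees owner_block 0 0 (trees F).
Proof. exact: flat_treesE. Qed.

Lemma relevant_colsE F :
  flatten [seq relevant_tree_cols F i | i <- tree_idxs F] =
  flat_trees (relevant_block (ptr F)) 0 0 (trees F).
Proof. exact: (flat_treesE (relevant_block (ptr F))). Qed.

Lemma simpleFE F : simpleF F = flat_trees simple_block 0 0 (trees F).
Proof. exact: flat_treesE. Qed.

Lemma simple_blocks_rcons_leaf k off s :
  flat_trees simple_block k off (rcons s Leaf) = flat_trees simple_block k off s.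
Proof. by rewrite -cats1 flat_trees_cat cats0. Qed.

Lemma simple_blocks_idx k k' off s :
  flat_trees simple_block k off s = flat_trees simple_block k' off s.
Proof. by elim: s k k' off => //= t s IH k k' off; rewrite (IH _ k'.+1). Qed.

Lemma relevant_blocks_rcons_leaf p k off s : k + size s != p ->
  flat_trees (relevant_block p) k off (rcons s Leaf) = flat_trees (relevant_block p) k off s.
Proof. by move=> h; rewrite -cats1 flat_trees_cat /= {2}/relevant_block /= (negbTE h) !cats0. Qed.

Lemma relevant_blocks_idx p k k' off s : p < k -> p < k' ->
  flat_trees (relevant_block p) k off s = flat_trees (relevant_block p) k' off s.
Proof.
elim: s k k' off => //= t s IH k k' off hk hk'.
rewrite (IH k.+1 k'.+1 _ (leqW hk) (leqW hk')) /relevant_block.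
by rewrite (gtn_eqF hk) (gtn_eqF hk').
Qed.

Lemma mem_relevant_blocks p k off s c :
  c \in flat_trees (relevant_block p) k off s -> off <= c < off + nleaves_seq s.
Proof.
elim: s k off => //= t s IH k off; rewrite mem_cat /relevant_block.
case/orP => [|/IH]; last by rewrite /nleaves_seq /=; lia.
case: ifP => // _; rewrite mem_iota /nleaves_seq /=; lia.
Qed.

Lemma size_owner_blocks k off s : size (flat_trees owner_block k off s) = nleaves_seq s.
Proof. by elim: s k off => //= t s IH k off; rewrite size_cat size_nseq IH. Qed.

Lemma size_colmap F : size (colmap F) = nleaves_seq (trees F).
Proof. by rewrite colmapE size_owner_blocks. Qed.

Lemma owner_blocks_off k off off' s :
  flat_trees owner_block k off s = flat_trees owner_block k off' s.
Proof. by elim: s k off off' => //= t s IH k off off'; rewrite (IH _ _ (off' + nleaves t)). Qed.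

Lemma owner_blocks_succ k off s :
  flat_trees owner_block k.+1 off s = map succn (flat_trees owner_block k off s).
Proof. by elim: s k off => //= t s IH k off; rewrite map_cat IH /owner_block map_nseq. Qed.

Lemma mem_owner_blocks k off s x :
  x \in flat_trees owner_block k off s -> k <= x < k + size s.
Proof.
elim: s k off => //= t s IH k off; rewrite mem_cat.
case/orP => [/nseqP [-> _]|/IH]; lia.
Qed.

Lemma nth_colmap_in s1 t s2 q c : nleaves_seq s1 <= c < nleaves_seq s1 + nleaves t ->
  nth 0 (colmap (Forest (s1 ++ t :: s2) q)) c = size s1.
Proof.
move=> h; rewrite colmapE /= flat_trees_cat nth_cat size_owner_blocks ifF; last lia.
by rewrite /= nth_cat /owner_block size_nseq ifT ?nth_nseq ?ifT ?add0n //; lia.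
Qed.

Lemma nth_lmcols_in s1 t s2 q c : nleaves_seq s1 <= c < nleaves_seq s1 + nleaves t ->
  nth false (lmcols (Forest (s1 ++ t :: s2) q)) c = nth false (lmflags t) (c - nleaves_seq s1).
Proof.
move=> h; rewrite /lmcols /= map_cat flatten_cat nth_cat size_flatten_lmflags ifF; last lia.
by rewrite /= nth_cat size_lmflags ifT //; lia.
Qed.

Lemma split_at_column s c : c < nleaves_seq s ->
  exists s1 t s2, s = s1 ++ t :: s2 /\ nleaves_seq s1 <= c < nleaves_seq s1 + nleaves t.
Proof.
elim: s c => [|t s IH] c //= hc.
case: (ltnP c (nleaves t)) => h; first by exists [::], t, s.
have [s1 [t' [s2 [-> h2]]]] : exists s1 t' s2, s = s1 ++ t' :: s2 /\
  nleaves_seq s1 <= c - nleaves t < nleaves_seq s1 + nleaves t'.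
  by apply: IH; move: hc; rewrite /nleaves_seq /=; lia.
by exists (t :: s1), t', s2; split=> //; move: h2; rewrite /nleaves_seq /=; lia.
Qed.

Definition label_from (x y p : nat) (f : bool) : label :=
  if (x != y) && (y <= p) then lab_L
  else if f then lab_N else if x != y then lab_R else lab_I.

Lemma label_ofE F j : label_of F j =
  label_from (nth 0 (colmap F) j) (nth 0 (colmap F) j.+1) (ptr F) (nth false (lmcols F) j.+1).
Proof. by []. Qed.

(* Renumbering of the trees when trees [p] and [p+1] are merged. *)
Definition merge_idx (p x : nat) : nat := if x <= p then x else x.-1.

Lemma label_from_merge p x y f :
  (x < p -> y <= p) -> (p < x -> (x == y) || (p.+1 < y)) -> ~~ ((x == p) && (y == p.+1)) ->
  label_from (merge_idx p x) (merge_idx p y) p f = label_from x y p f.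
Proof.
move=> h1 h2 h3; rewrite /label_from.
have [-> ->] : ((merge_idx p x != merge_idx p y) = (x != y)) /\
               ((x != y) && (merge_idx p y <= p) = (x != y) && (y <= p)).
  by rewrite /merge_idx; split; repeat case: ifP => ?; lia.
by [].
Qed.

Section JoinTop.
Variables (s1 s3 : seq tree) (a b : tree).
Let p := size s1.
Let c1 := nleaves_seq s1.
Let na := nleaves a.
Let nb := nleaves b.
Let FP := Forest (s1 ++ a :: b :: s3) p.
Let FJ := Forest (s1 ++ Node a b :: s3) p.

Lemma colmap_split : colmap FP =
  flat_trees owner_block 0 0 s1 ++ nseq na p ++ nseq nb p.+1 ++ flat_trees owner_block p.+2 0 s3.
Proof. by rewrite colmapE /= flat_trees_cat /= add0n (owner_blocks_off _ _ 0). Qed.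

Lemma colmap_join : colmap FJ = map (merge_idx p) (colmap FP).
Proof.
rewrite colmap_split colmapE /= flat_trees_cat /= add0n !map_cat !map_nseq.
rewrite /merge_idx leqnn ltnn /= -/p /owner_block /= nseqD -catA.
congr (_ ++ _ ++ _ ++ _).
- rewrite -[LHS]map_id; apply/eq_in_map => x /mem_owner_blocks h.
  by rewrite ifT //; lia.
- rewrite (owner_blocks_off _ _ 0) [in RHS]owner_blocks_succ -map_comp.
  rewrite -[LHS]map_id; apply/eq_in_map => x /mem_owner_blocks h /=.
  by rewrite ifF //; lia.
Qed.

Lemma nth_colmap_split c : c < nleaves_seq (s1 ++ a :: b :: s3) ->
  let x := nth 0 (colmap FP) c in
  [/\ c < c1 -> x < p, c1 <= c < c1 + na -> x = p,
      c1 + na <= c < c1 + na + nb -> x = p.+1 & c1 + na + nb <= c -> p.+2 <= x].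
Proof.
rewrite nleaves_seq_cat /nleaves_seq /= -/(nleaves_seq s1) -/(nleaves_seq s3) -/c1 -/na -/nb.
move=> hc; rewrite colmap_split nth_cat size_owner_blocks -/c1.
case: (ltnP c c1) => h1.
  split=> h; try lia.
  have /mem_owner_blocks : nth 0 (flat_trees owner_block 0 0 s1) c \in
                           flat_trees owner_block 0 0 s1.
    by apply: mem_nth; rewrite size_owner_blocks.
  by rewrite /p; lia.
rewrite nth_cat size_nseq; case: (ltnP (c - c1) na) => h2.
  by rewrite nth_nseq h2; split=> h; lia.
rewrite nth_cat size_nseq; case: (ltnP (c - c1 - na) nb) => h3.
  by rewrite nth_nseq h3; split=> h; lia.
split=> h; try lia.
have : nth 0 (flat_trees owner_block p.+2 0 s3) (c - c1 - na - nb) \in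
       flat_trees owner_block p.+2 0 s3.
  by apply: mem_nth; rewrite size_owner_blocks; lia.
by move/mem_owner_blocks; lia.
Qed.

Lemma lmcols_join c : c != c1 -> nth false (lmcols FJ) c = nth false (lmcols FP) c.
Proof.
rewrite /lmcols /= !map_cat !flatten_cat /= nth_cat [RHS]nth_cat size_flatten_lmflags -/c1.
case: ltnP => // h hc; have [k ->] : exists k, c - c1 = k.+1 by exists (c - c1).-1; lia.
have : 0 < size (lmflags a) by rewrite size_lmflags nleaves_gt0.
by case: (lmflags a) => [|z la] //=; rewrite catA.
Qed.

Lemma label_join j : j != (c1 + na).-1 -> j.+1 < nleaves_seq (s1 ++ a :: b :: s3) ->
  label_of FJ j = label_of FP j.
Proof.
move=> hr hj; rewrite !label_ofE colmap_join !(nth_map 0) ?size_colmap //= 1?ltnW //.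
have [x1 x2 x3 x4] := nth_colmap_split (ltnW hj).
have [y1 y2 y3 y4] := nth_colmap_split hj.
have ha : 0 < na := nleaves_gt0 a; have hb : 0 < nb := nleaves_gt0 b.
set x := nth 0 _ j in x1 x2 x3 x4 *; set y := nth 0 _ j.+1 in y1 y2 y3 y4 *.
case: (eqVneq j.+1 c1) => hL; last by rewrite lmcols_join // label_from_merge //; lia.
rewrite /merge_idx !ifT /label_from; try lia.
by have -> : (x != y) && (y <= p) by lia.
Qed.

Lemma right_column_split :
  [/\ nth 0 (colmap FP) (c1 + na).-1 = p, nth 0 (colmap FP) (c1 + na) = p.+1
    & nth false (lmcols FP) (c1 + na) = ~~ is_leaf b].
Proof.
have ha := nleaves_gt0 a; have hb := nleaves_gt0 b.
have hc : c1 + na = nleaves_seq (rcons s1 a).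
  by rewrite -cats1 nleaves_seq_cat /nleaves_seq /= addn0.
split; first by rewrite nth_colmap_in //; lia.
  by rewrite /FP -cat_rcons nth_colmap_in ?size_rcons // -hc; lia.
by rewrite /FP -cat_rcons nth_lmcols_in -hc ?subnn ?lmflags_head //; lia.
Qed.

Lemma label_right_split : label_of FP (c1 + na).-1 = if is_leaf b then lab_R else lab_N.
Proof.
have [hx hy hf] := right_column_split.
rewrite label_ofE prednK ?addn_gt0 ?nleaves_gt0 ?orbT // hx hy hf /label_from /= ltnn.
by rewrite (ltn_eqF (ltnSn p)); case: (is_leaf b).
Qed.

Lemma label_right_join : label_of FJ (c1 + na).-1 = if is_leaf b then lab_I else lab_N.
Proof.
have [hx hy hf] := right_column_split.
have ha := nleaves_gt0 a; have hb := nleaves_gt0 b.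
have hN : c1 + na < nleaves_seq (trees FP).
  by rewrite /= nleaves_seq_cat /c1 /na /nleaves_seq /=; lia.
rewrite label_ofE colmap_join !(nth_map 0) ?size_colmap; try lia.
rewrite prednK ?addn_gt0 ?ha ?orbT // lmcols_join ?hx ?hy ?hf; last by rewrite /na; lia.
by rewrite /label_from /merge_idx leqnn ltnn eqxx /=; case: (is_leaf b).
Qed.
End JoinTop.

Lemma reduce_reduced D : reduced D -> reduce D = D.
Proof.
rewrite /reduced /has_opposing_pair has_filter negbK => /eqP h.
by rewrite /reduce /= /reduce_step h.
Qed.

Lemma foldr_maxn_ge (s : seq nat) x : x \in s -> x <= foldr maxn 0 s.
Proof.
elim: s => //= y s IH; rewrite in_cons leq_max.
by case/orP => [/eqP ->|/IH ->]; rewrite ?leqnn ?orbT.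
Qed.

Lemma foldr_maxn_mem (s : seq nat) : s != [::] -> foldr maxn 0 s \in s.
Proof.
elim: s => //= y s IH _; rewrite in_cons.
case: s IH => [|z s] IH; first by rewrite maxn0 eqxx.
have [->|->] : maxn y (foldr maxn 0 (z :: s)) = y \/
               maxn y (foldr maxn 0 (z :: s)) = foldr maxn 0 (z :: s) by lia.
  by rewrite eqxx.
by rewrite IH ?orbT.
Qed.

Lemma foldr_minn_le (s : seq nat) d x : x \in s -> foldr minn d s <= x.
Proof.
elim: s => //= y s IH; rewrite in_cons geq_min.
by case/orP => [/eqP ->|/IH ->]; rewrite ?leqnn ?orbT.
Qed.

Lemma foldr_minn_mem (s : seq nat) d : foldr minn d s \in d :: s.
Proof.
elim: s => [|y s IH] /=; first by rewrite mem_head.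
rewrite !in_cons; have [->|->] : minn y (foldr minn d s) = y \/
                                 minn y (foldr minn d s) = foldr minn d s by lia.
  by rewrite eqxx orbT.
by move: IH; rewrite in_cons => /orP [->|->]; rewrite ?orbT.
Qed.

Lemma foldr_minn_head_mem (s : seq nat) : s != [::] -> foldr minn (head 0 s) s \in s.
Proof.
case: s => // y s _; have := foldr_minn_mem (y :: s) y.
by rewrite in_cons => /predU1P [->|//]; rewrite mem_head.
Qed.

Lemma sumn_iota_update (f g : nat -> nat) lo n r : lo <= r < lo + n ->
  (forall j, lo <= j < lo + n -> j != r -> f j = g j) ->
  sumn (map f (iota lo n)) + g r = sumn (map g (iota lo n)) + f r.
Proof.
elim: n lo => [|n IH] lo hr fg; first lia.
rewrite /= -!addnA; case: (eqVneq lo r) => [eq_lo|ne].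
  subst r; have -> : sumn (map f (iota lo.+1 n)) = sumn (map g (iota lo.+1 n)).
    by congr sumn; apply/eq_in_map => j; rewrite mem_iota => hj; apply: fg; lia.
  lia.
rewrite fg ?IH //; try lia.
by move=> j hj; apply: fg; lia.
Qed.

Lemma weight_I_beyond s q c : q < size s -> c.+1 < nleaves_seq s ->
  (forall x, x \in flat_trees (relevant_block q) 0 0 s -> x <= c) ->
  weight lab_I (label_of (Forest s q) c) = 0.
Proof.
move=> hq hc hall.
have [s1 [t [s2 [E ht]]]] := split_at_column hc.
have relevant_of i : ~~ is_leaf (nth Leaf s i) || (i == q) -> i < size s ->
    nleaves_seq (take i s) + nleaves (nth Leaf s i) <= c.+1.
  move=> hi his; have hn := nleaves_gt0 (nth Leaf s i).
  suff : (nleaves_seq (take i s) + nleaves (nth Leaf s i)).-1 <= c by lia.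
  apply: hall; rewrite -[s in flat_trees _ _ _ s](cat_take_drop i s) (drop_nth Leaf his).
  rewrite flat_trees_cat mem_cat /= mem_cat /relevant_block !add0n size_take his hi /=.
  by apply/orP; right; apply/orP; left; rewrite mem_iota; lia.
have hs1 : size s1 < size s by rewrite E size_cat /=; lia.
have [lt nq] : is_leaf t /\ size s1 != q.
  suff : ~~ (~~ is_leaf t || (size s1 == q)) by rewrite negb_or negbK => /andP.
  have ht' : nth Leaf s (size s1) = t by rewrite E nth_cat ltnn subnn.
  have hst : take (size s1) s = s1 by rewrite E take_size_cat.
  by apply/negP; rewrite -ht' => /relevant_of/(_ hs1); rewrite ht' hst; lia.
have hq1 : q < size s1.
  rewrite ltnNge leq_eqVlt (negbTE nq) /=; apply/negP => hlt.
  have := relevant_of q; rewrite eqxx orbT => /(_ isT hq).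
  rewrite E take_cat ltnNge (ltnW hlt) /= nleaves_seq_cat.
  have [k ->] : exists k, q - size s1 = k.+1 by exists (q - size s1).-1; lia.
  by move: ht; rewrite /nleaves_seq /=; lia.
rewrite label_ofE E (@nth_colmap_in s1 t s2 q c.+1) // nth_lmcols_in // lmflags_leaf //.
by rewrite /label_from (leqNgt (size s1)) hq1 andbF; case: (_ != _).
Qed.

Lemma label_rcons_leaf s q j : j.+1 < nleaves_seq s ->
  label_of (Forest (rcons s Leaf) q) j = label_of (Forest s q) j.
Proof.
move=> hj; rewrite !label_ofE !colmapE /lmcols /= -!cats1 flat_trees_cat map_cat flatten_cat.
rewrite !nth_cat size_owner_blocks size_flatten_lmflags hj.
by have -> : j < nleaves_seq s by apply: ltnW.
Qed.

Lemma join_at_cat s1 a b s3 : join_at (s1 ++ a :: b :: s3) (size s1) = s1 ++ Node a b :: s3.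
Proof.
rewrite /join_at take_size_cat // !nth_cat ltnn subnn ltnNge leqnSn subSnn /= drop_cat.
have -> : (size s1).+2 < size s1 = false by rewrite ltnNge (leqW (leqnSn _)).
by rewrite -addn2 addKn /= ?drop0.
Qed.

(* [a] is the current tree and [b] its right neighbour in the window padded by
   one trivial tree. *)
Section X1Attach.
Variables (s1 s2 s3 u : seq tree) (a b : tree) (q : nat).
Hypothesis pad_s2 : rcons s2 Leaf = b :: s3.
Hypothesis q_lt : q < size u.
Hypothesis same_leaves : nleaves_seq (s1 ++ a :: s2) = nleaves_seq u.

Let p := size s1.
Let c1 := nleaves_seq s1.
Let na := nleaves a.
Let nb := nleaves b.
Let N := nleaves_seq (s1 ++ a :: s2).
Let D := FDiag (Forest (s1 ++ a :: s2) p) (Forest u q).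
Let DJ := FDiag (Forest (s1 ++ Node a b :: s3) p) (Forest (rcons u Leaf) q).

Lemma pad_window : rcons (s1 ++ a :: s2) Leaf = s1 ++ a :: b :: s3.
Proof. by rewrite rcons_cat /= pad_s2. Qed.

Lemma nleaves_pad : nleaves_seq (s1 ++ a :: b :: s3) = N.+1.
Proof. by rewrite -pad_window nleaves_seq_rcons_leaf. Qed.

Lemma x1_attachE : x1_attach D = DJ.
Proof. by rewrite /x1_attach /= pad_window join_at_cat. Qed.

Lemma simpleF_bot_x1 : simpleF (bot DJ) = simpleF (bot D).
Proof. by rewrite !simpleFE simple_blocks_rcons_leaf. Qed.

Lemma x1_creates_caretE :
  x1_creates_caret D = ~~ [&& is_leaf a, is_leaf b & c1 \in simpleF (bot D)].
Proof.
rewrite /x1_creates_caret x1_attachE -simpleF_bot_x1 /= pad_window !nth_cat ltnn subnn.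
by rewrite ltnNge leqnSn subSnn /start /= take_size_cat.
Qed.

Lemma mem_simpleF_x1 c : c \in simpleF (top DJ) ->
  c \in simpleF (top D) \/ [/\ is_leaf a, is_leaf b & c = c1].
Proof.
rewrite !simpleFE [trees _]/= [trees _]/=.
rewrite -[flat_trees _ _ _ (s1 ++ a :: s2)]simple_blocks_rcons_leaf.
rewrite pad_window !flat_trees_cat !flat_trees_cons !mem_cat !add0n.
rewrite [simple_block _ _ (Node a b)]/simple_block simple_at_node (simple_blocks_idx _ p.+2 _ s3).
rewrite [nleaves (Node a b)]/= addnA.
case/or3P => [->|+|->]; rewrite ?orbT; [by left | | by left].
case: ifP => [/andP [la lb]|_]; first by rewrite inE => /eqP ->; right.
by rewrite mem_cat => /orP [] ->; left; rewrite ?orbT.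
Qed.

Lemma reduced_x1_attach : reduced D -> x1_creates_caret D -> reduced DJ.
Proof.
rewrite x1_creates_caretE /reduced /has_opposing_pair simpleF_bot_x1 => /hasPn red new.
apply/hasPn => c /mem_simpleF_x1 [/red //|[la lb ->]].
by move: new; rewrite la lb.
Qed.

Lemma ell1_x1_attach : ell1 DJ = (ell1 D).+1.
Proof.
have ncs s : sumn (map ncarets s) = ncarets_seq s by [].
have := ncarets_seq_rcons_leaf s2; rewrite pad_s2 /ncarets_seq /= => hs2.
rewrite /ell1 /ncaretsF /= !ncs ncarets_seq_rcons_leaf !ncarets_seq_cat /ncarets_seq /=; lia.
Qed.

Lemma relevant_cols_D : relevant_cols D =
  flat_trees (relevant_block p) 0 0 s1 ++ iota c1 na ++
  (if is_leaf b then [::] else iota (c1 + na) nb) ++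
  flat_trees (relevant_block p) p.+2 (c1 + na + nb) s3 ++ flat_trees (relevant_block q) 0 0 u.
Proof.
rewrite /relevant_cols !relevant_colsE /= !catA; congr (_ ++ _); rewrite -!catA.
rewrite flat_trees_cat flat_trees_cons {2}/relevant_block eqxx orbT !add0n; congr (_ ++ _ ++ _).
rewrite -relevant_blocks_rcons_leaf; last by rewrite /p; lia.
rewrite pad_s2 flat_trees_cons {1}/relevant_block (gtn_eqF (ltnSn p)) orbF.
by case: (is_leaf b).
Qed.

Lemma relevant_cols_DJ : relevant_cols DJ =
  flat_trees (relevant_block p) 0 0 s1 ++ iota c1 na ++ iota (c1 + na) nb ++
  flat_trees (relevant_block p) p.+2 (c1 + na + nb) s3 ++ flat_trees (relevant_block q) 0 0 u.
Proof.
rewrite /relevant_cols !relevant_colsE /= relevant_blocks_rcons_leaf ?add0n ?(gtn_eqF q_lt) //.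
rewrite !catA; congr (_ ++ _); rewrite -!catA.
rewrite flat_trees_cat flat_trees_cons (@relevant_blocks_idx p p.+1 p.+2) ?add0n //.
by rewrite /relevant_block eqxx orbT -/(relevant_block p) iotaD -catA addnA.
Qed.

Lemma relevant_cols_x1 : relevant_cols DJ =i relevant_cols D ++ iota (c1 + na) nb.
Proof.
move=> x; rewrite relevant_cols_D relevant_cols_DJ !mem_cat.
by case: (is_leaf b); rewrite ?in_nil /=; do !case: (x \in _).
Qed.

Lemma mem_relevant_cols_D x :
  (c1 <= x < c1 + na) || ~~ is_leaf b && (c1 + na <= x < c1 + na + nb) -> x \in relevant_cols D.
Proof.
rewrite relevant_cols_D !mem_cat => /orP [h|/andP [nl h]].
  by rewrite mem_iota h orbT.
by rewrite (negbTE nl) [x \in iota _ nb]mem_iota h !orbT.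
Qed.

Lemma relevant_cols_D_lt x : x \in relevant_cols D -> x < N.
Proof.
rewrite /relevant_cols !relevant_colsE mem_cat.
by case/orP => /mem_relevant_blocks /=; rewrite -?same_leaves /N; lia.
Qed.

Lemma supp_bounds_D : supp_lo D <= c1 /\ (c1 + na).-1 <= supp_hi D < N.
Proof.
have ha := nleaves_gt0 a.
have mem_c1 : c1 \in relevant_cols D by apply: mem_relevant_cols_D; lia.
have mem_r : (c1 + na).-1 \in relevant_cols D by apply: mem_relevant_cols_D; lia.
split; first exact: foldr_minn_le.
rewrite foldr_maxn_ge //=; apply/relevant_cols_D_lt/foldr_maxn_mem.
by case: (relevant_cols D) mem_c1.
Qed.

Lemma supp_x1 : supp_lo DJ = supp_lo D /\ supp_hi DJ = maxn (supp_hi D) (c1 + na + nb).-1.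
Proof.
have [lo_c1 /andP [r_hi _]] := supp_bounds_D.
have ha := nleaves_gt0 a; have hb := nleaves_gt0 b.
have mem_c1 : c1 \in relevant_cols D by apply: mem_relevant_cols_D; lia.
have ne_D : relevant_cols D != [::] by case: (relevant_cols D) mem_c1.
have ne_DJ : relevant_cols DJ != [::].
  by apply/eqP => E; have := relevant_cols_x1 c1; rewrite E mem_cat mem_c1.
have in_DJ x : x \in relevant_cols D -> x \in relevant_cols DJ.
  by move=> hx; rewrite relevant_cols_x1 mem_cat hx.
split; apply/eqP; rewrite eqn_leq; apply/andP; split.
- by apply/foldr_minn_le/in_DJ/foldr_minn_head_mem.
- have := foldr_minn_head_mem ne_DJ; rewrite -/(supp_lo DJ) relevant_cols_x1 mem_cat.
  by case/orP => [/(foldr_minn_le (head 0 (relevant_cols D)))|] //; rewrite mem_iota; lia.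
- have := foldr_maxn_mem ne_DJ; rewrite -/(supp_hi DJ) relevant_cols_x1 mem_cat.
  case/orP => [/foldr_maxn_ge h|]; first exact: leq_trans h (leq_maxl _ _).
  by rewrite mem_iota; lia.
- rewrite geq_max; apply/andP; split; first by apply/foldr_maxn_ge/in_DJ/foldr_maxn_mem.
  by apply: foldr_maxn_ge; rewrite relevant_cols_x1 mem_cat mem_iota; apply/orP; right; lia.
Qed.

Lemma right_spaceE : right_space D = (c1 + na).-1.
Proof. by rewrite /right_space /start /ftree /= take_size_cat // nth_cat ltnn subnn. Qed.

Let FP := Forest (s1 ++ a :: b :: s3) p.
Let FJ := Forest (s1 ++ Node a b :: s3) p.
Let Bp := Forest (rcons u Leaf) q.
Let wD j := weight (label_of FP j) (label_of Bp j).
Let wJ j := weight (label_of FJ j) (label_of Bp j).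

Lemma label_D j : j < supp_hi D ->
  label_of (top D) j = label_of FP j /\ label_of (bot D) j = label_of Bp j.
Proof.
have [_ /andP [_ hN]] := supp_bounds_D.
by move=> hj; rewrite /FP -pad_window /Bp !label_rcons_leaf //= -?same_leaves /N; lia.
Qed.

Lemma ell0_D : ell0 D = sumn (map wD (iota (supp_lo D) (supp_hi D - supp_lo D))).
Proof.
rewrite /ell0 /support_spaces; congr sumn; apply/eq_in_map => j; rewrite mem_iota => hj.
have hj' : j < supp_hi D by lia.
by have [-> ->] := label_D hj'.
Qed.

Lemma ell0_DJ :
  ell0 DJ = sumn (map wJ (iota (supp_lo D) (maxn (supp_hi D) (c1 + na + nb).-1 - supp_lo D))).
Proof. by rewrite /ell0 /support_spaces; have [-> ->] := supp_x1. Qed.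

Lemma weight_x1_off_right j : j != (c1 + na).-1 -> j < N -> wJ j = wD j.
Proof. by move=> hr hj; rewrite /wJ /wD label_join // nleaves_pad. Qed.

Lemma ell0_x1_nonleaf : ~~ is_leaf b -> ell0 DJ = ell0 D.
Proof.
move=> nl; have [_ /andP [_ hN]] := supp_bounds_D.
have hb : (c1 + na + nb).-1 <= supp_hi D.
  by apply/foldr_maxn_ge/mem_relevant_cols_D; rewrite nl; have := nleaves_gt0 b; lia.
rewrite ell0_DJ ell0_D (maxn_idPl hb); congr sumn; apply/eq_in_map => j; rewrite mem_iota => hj.
case: (eqVneq j (c1 + na).-1) => [->|ne]; last by apply: weight_x1_off_right; lia.
by rewrite /wJ /wD label_right_join label_right_split (negbTE nl).
Qed.

Lemma ell0_x1_inner : is_leaf b -> (c1 + na).-1 < supp_hi D ->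
  ell0 DJ + weight lab_R (label_of Bp (c1 + na).-1) =
  ell0 D + weight lab_I (label_of Bp (c1 + na).-1).
Proof.
move=> lb r_hi; have [lo_c1 /andP [_ hN]] := supp_bounds_D.
have ha : 0 < na := nleaves_gt0 a.
have hmax : (c1 + na + nb).-1 <= supp_hi D by rewrite /nb nleaves_leaf //; lia.
rewrite ell0_DJ ell0_D (maxn_idPl hmax).
have wDr : wD (c1 + na).-1 = weight lab_R (label_of Bp (c1 + na).-1).
  by rewrite /wD label_right_split lb.
have wJr : wJ (c1 + na).-1 = weight lab_I (label_of Bp (c1 + na).-1).
  by rewrite /wJ label_right_join lb.
rewrite -wDr -wJr; apply: sumn_iota_update => [|j hj ne]; first lia.
by apply: weight_x1_off_right; lia.
Qed.

Lemma ell0_x1_edge : is_leaf b -> supp_hi D <= (c1 + na).-1 -> ell0 DJ = ell0 D.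
Proof.
move=> lb hi_r; have [lo_c1 /andP [r_hi hN]] := supp_bounds_D.
have ha : 0 < na := nleaves_gt0 a.
have hi_r' : supp_hi D = (c1 + na).-1 by lia.
rewrite ell0_DJ ell0_D /nb nleaves_leaf //.
rewrite (_ : maxn _ _ - _ = (supp_hi D - supp_lo D).+1); last lia.
rewrite -addn1 iotaD map_cat sumn_cat /= addn0.
have -> : wJ (supp_lo D + (supp_hi D - supp_lo D)) = 0.
  rewrite (_ : _ + _ = (c1 + na).-1); last lia.
  rewrite /wJ label_right_join lb; apply: weight_I_beyond => [|/=|x].
  - by rewrite size_rcons ltnW.
  - by rewrite nleaves_seq_rcons_leaf -same_leaves; lia.
  - rewrite /= relevant_blocks_rcons_leaf ?add0n ?(gtn_eqF q_lt) // => hx.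
    suff : x <= supp_hi D by lia.
    by apply: foldr_maxn_ge; rewrite /relevant_cols !relevant_colsE mem_cat hx orbT.
rewrite addn0; congr sumn; apply/eq_in_map => j; rewrite mem_iota => hj.
by apply: weight_x1_off_right; lia.
Qed.

Theorem ell_x1_attach : reduced D -> x1_creates_caret D ->
  (ell (reduce (x1_attach D)) = (ell D).+1 \/ (ell (reduce (x1_attach D))).+1 = ell D) /\
  ((ell (reduce (x1_attach D))).+1 = ell D <->
   label_pair D (right_space D) = Some (lab_R, lab_R)).
Proof.
move=> red new; rewrite x1_attachE reduce_reduced ?reduced_x1_attach //.
rewrite /ell ell1_x1_attach right_spaceE /label_pair.
have [lo_c1 _] := supp_bounds_D; have ha : 0 < na := nleaves_gt0 a.
rewrite (_ : supp_lo D <= (c1 + na).-1); last lia.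
case: ltnP => r_hi /=.
- have [-> ->] := label_D r_hi; rewrite label_right_split.
  case: (boolP (is_leaf b)) => lb; last first.
    by rewrite ell0_x1_nonleaf //; split; [left; lia | split => // h; lia].
  have := ell0_x1_inner lb r_hi.
  by case: (label_of Bp _) => /= h; split; try lia; split => // e; lia.
- have -> : ell0 DJ = ell0 D.
    by case: (boolP (is_leaf b)) => lb; [exact: ell0_x1_edge | exact: ell0_x1_nonleaf].
  by split; [left; lia | split => // h; lia].
Qed.
End X1Attach.

Theorem proposition4p3p6 (D : fdiag) :
  wf_diag D -> reduced D -> x1_creates_caret D ->
  (ell (reduce (x1_attach D)) = (ell D).+1 \/ (ell (reduce (x1_attach D))).+1 = ell D) /\
  ((ell (reduce (x1_attach D))).+1 = ell D <->
   label_pair D (right_space D) = Some (lab_R, lab_R)).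
Proof.
case: D => [[s p] [u q]] /and3P [/= hp hq /eqP hN].
have [s1 [a [s2 [Es Ep]]]] : exists s1 a s2, s = s1 ++ a :: s2 /\ size s1 = p.
  exists (take p s), (nth Leaf s p), (drop p.+1 s).
  by rewrite -drop_nth // cat_take_drop size_take hp.
subst s p; case E: (rcons s2 Leaf) => [|b s3]; first by case: s2 {hp hN} E.
exact: (ell_x1_attach E hq hN).
Qed.
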